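(* There is a universal constant $c>0$ such that the following holds. Let $n\ge1$, $N=2^n$, $\beta\in(0,1/2]$, $\epsilon\in[0,\frac{\beta}{n+1})$ and $\delta\in[0,1]$. Every $(\epsilon,\delta,\mathsf{Zipf})$-PAC quantum learner for the concept class $\mathcal{F}_n$ of all Boolean functions $\{0,1\}^n\to\{0,1\}$ uses a number $m$ of quantum examples satisfying \[ m\;\ge\; c\cdot\frac{(1-\delta)(1-H(\beta))N-H(\delta)}{n}. \]
   Context: Identify $\{0,1\}^n$ with $[N]=\{1,\dots,N\}$. The Zipf distribution on $[N]$ is $\mathsf{Zipf}(k)=\frac{1}{kH_N}$, where $H_N=\sum_{k=1}^N \frac1k$. For a concept $c:\{0,1\}^n\to\{0,1\}$ and a distribution $D$, a quantum example is one copy of the state $\sum_{x\in\{0,1\}^n}\sqrt{D(x)}\,|x\rangle|c(x)\rangle$. An $(\epsilon,\delta,D)$-PAC quantum learner for a concept class $\mathcal{C}$ is an algorithm that, for every $c\in\mathcal{C}$, given $m$ quantum examples (for $c$ and $D$), outputs a hypothesis $h:\{0,1\}^n\to\{0,1\}$ such that, with probability at least $1-\delta$, $\Pr_{x\sim D}[c(x)\ne h(x)]\le\epsilon$. $H(p)=-p\log_2p-(1-p)\log_2(1-p)$ is the binary entropy. *)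

From HB Require Import structures.
From mathcomp Require Import all_boot all_order all_algebra.
From mathcomp Require Import complex.
From mathcomp Require Import Rstruct.
From Stdlib Require Rdefinitions Rpower.

Set Implicit Arguments.
Unset Strict Implicit.
Unset Printing Implicit Defensive.

Import Order.TTheory GRing.Theory Num.Theory.
Local Open Scope ring_scope.

Definition RR : rcfType := Rdefinitions.R.
Definition CC : numClosedFieldType := RR[i].
Definition toC (x : RR) : CC := real_complex RR x.

Definition log2 (x : RR) : RR := Rpower.ln x / Rpower.ln 2.
Definition xlog2x (x : RR) : RR := if x == 0 then 0 else x * log2 x.
Definition binary_entropy (p : RR) : RR := - xlog2x p - xlog2x (1 - p).

(* {0,1}^n is identified with [N] = {1,..,N}, N = 2^n; we use 'I_(2^n),
   where the element x : 'I_(2^n) stands for x.+1 \in [N]. *)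
Definition domain (n : nat) := 'I_(2 ^ n).

Definition harmonic (N : nat) : RR := \sum_(k < N) (k.+1%:R)^-1.

Definition zipf (n : nat) (x : domain n) : RR :=
  ((x.+1)%:R * harmonic (2 ^ n))^-1.

Definition boolfun (n : nat) := {ffun domain n -> bool}.

Definition err (n : nat) (D : domain n -> RR) (c h : boolfun n) : RR :=
  \sum_(x : domain n | c x != h x) D x.

(* computational basis of the Hilbert space of m quantum examples:
   (C^{N} (x) C^2)^{(x) m}, basis states |x_1,b_1>...|x_m,b_m> *)
Definition ex_basis (n m : nat) := {ffun 'I_m -> domain n * bool}.
Definition qdim (n m : nat) : nat := #|{: ex_basis n m}|%N.

(* amplitudes of one quantum example sum_x sqrt(D x) |x>|c x> *)
Definition qex_amp (n : nat) (D : domain n -> RR) (c : boolfun n)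
  (xb : domain n * bool) : CC :=
  if xb.2 == c xb.1 then toC (Num.sqrt (D xb.1)) else 0.

(* the state of m copies (tensor product), as a column vector *)
Definition qex_state (n m : nat) (D : domain n -> RR) (c : boolfun n)
  : 'cV[CC]_(qdim n m) :=
  \col_i \prod_(j < m) qex_amp D c ((enum_val i : ex_basis n m) j).

Definition adj (p q : nat) (A : 'M[CC]_(p, q)) : 'M[CC]_(q, p) :=
  (map_mx (@Num.conj CC) A)^T.

Definition psd (d : nat) (A : 'M[CC]_d) : Prop :=
  adj A = A /\ forall u : 'cV[CC]_d, 0 <= (adj u *m A *m u) 0 0.

(* A quantum learner using m quantum examples: an arbitrary quantum algorithm
   acting on the m examples and outputting a hypothesis is described by a
   POVM {M_h}_h on the m-example Hilbert space, indexed by hypotheses. *)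
Definition povm (n m : nat) (M : boolfun n -> 'M[CC]_(qdim n m)) : Prop :=
  (forall h, psd (M h)) /\ \sum_h M h = 1%:M.

Definition out_prob (n m : nat) (M : boolfun n -> 'M[CC]_(qdim n m))
  (psi : 'cV[CC]_(qdim n m)) (h : boolfun n) : CC :=
  (adj psi *m M h *m psi) 0 0.

Definition pac_learner (n m : nat) (D : domain n -> RR) (eps delta : RR)
  (M : boolfun n -> 'M[CC]_(qdim n m)) : Prop :=
  povm M /\
  forall c : boolfun n,
    toC (1 - delta) <= \sum_(h : boolfun n | err D c h <= eps)
                         out_prob M (qex_state m D c) h.

From Stdlib Require Import Rtrigo_def Exp_prop Rpower.
From mathcomp Require Import all_boot all_order all_algebra.
From mathcomp Require Import complex.
From mathcomp Require Import Rstruct ring lra.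
Set Implicit Arguments.
Unset Strict Implicit.
Unset Printing Implicit Defensive.
Import Order.TTheory GRing.Theory Num.Theory.
Local Open Scope ring_scope.

(* Sum the success condition of the learner over all 2^N concepts c: the
   weights <psi_c| M_h |psi_c> of hypotheses h that are eps-close to c add up
   to at least (1 - delta) 2^N.  Each weight is at most tr M_h, and since every
   point has Zipf mass at least 1/((n+1)N), a hypothesis h is eps-close only to
   concepts within Hamming distance beta N of h, of which there are at most
   2^(H(beta) N).  Hence (1 - delta) 2^N <= 2^(H(beta) N) tr (sum_h M_h)
   = 2^(H(beta) N) (2N)^m.  Taking logarithms and using
   -(1 - delta) log (1 - delta) <= H(delta) gives
   (1 - delta)(1 - H(beta)) N - H(delta) <= (n + 1) m <= 2 n m. *)

Lemma harmonic_gt0 N : (0 < N)%N -> 0 < harmonic N.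
Proof.
case: N => // N _; rewrite /harmonic big_ord_recl /= invr1.
by apply: ltr_pwDl => //; apply: sumr_ge0 => i _; rewrite invr_ge0.
Qed.

Lemma harmonic_double N : (0 < N)%N -> harmonic (N * 2) <= harmonic N + 1.
Proof.
move=> N_gt0; rewrite /harmonic -!(big_mkord xpredT (fun k => k.+1%:R^-1)).
rewrite (big_cat_nat (n := N)) //= ?leq_pmulr // lerD2l.
apply: (@le_trans _ _ (\sum_(N <= k < N * 2) (N%:R : RR)^-1)).
  apply: ler_sum_nat => k /andP [Nk _].
  by rewrite lef_pV2 ?posrE ?ltr0n // ler_nat; apply: leqW.
rewrite sumr_const_nat muln2 -addnn addnK.
by rewrite -[_ *+ N]mulr_natr mulVf // pnatr_eq0 -lt0n.
Qed.

Lemma harmonic_exp2 n : harmonic (2 ^ n) <= n.+1%:R.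
Proof.
elim: n => [|n IH]; first by rewrite /harmonic big_ord1 invr1.
rewrite expnSr; apply: le_trans (harmonic_double (expn_gt0 2 n)) _.
by rewrite -natr1 lerD2r.
Qed.

Lemma zipf_ge0 n (x : domain n) : 0 <= zipf x.
Proof. by rewrite /zipf invr_ge0 mulr_ge0 // ltW // harmonic_gt0 ?expn_gt0. Qed.

Lemma sum_zipf n : \sum_(x : domain n) zipf x = 1.
Proof.
under eq_bigr => x _ do rewrite /zipf invfM.
by rewrite -mulr_suml divff // gt_eqF // harmonic_gt0 ?expn_gt0.
Qed.

Lemma zipf_ge n (x : domain n) : ((2 ^ n)%:R * n.+1%:R)^-1 <= zipf x.
Proof.
have H_gt0 := harmonic_gt0 (expn_gt0 2 n).
rewrite /zipf lef_pV2 ?posrE ?mulr_gt0 ?ltr0n ?expn_gt0 //.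
by apply: ler_pM; rewrite ?ler_nat ?harmonic_exp2 // ltW.
Qed.

Definition hamming (T : finType) (c h : {ffun T -> bool}) : nat :=
  #|[set x | c x != h x]|.

Lemma hamming_le_card (T : finType) (c h : {ffun T -> bool}) :
  (hamming c h <= #|T|)%N.
Proof. exact: max_card. Qed.

Lemma hamming_le_of_zipf_err n (c h : boolfun n) (beta : RR) :
  err (@zipf n) c h < beta / n.+1%:R -> (hamming c h)%:R <= beta * (2 ^ n)%:R.
Proof.
move=> err_lt; apply: ltW.
have N_gt0 : 0 < (2 ^ n)%:R :> RR by rewrite ltr0n expn_gt0.
suff : (hamming c h)%:R * ((2 ^ n)%:R * n.+1%:R)^-1 < beta / n.+1%:R.
  by rewrite invfM mulrA ltr_pM2r ?invr_gt0 ?ltr0n // ltr_pdivrMr.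
apply: le_lt_trans err_lt; rewrite mulr_natl /hamming cardsE -sumr_const.
by apply: ler_sum => x _; apply: zipf_ge.
Qed.

Lemma lnM (x y : RR) : 0 < x -> 0 < y -> ln (x * y) = ln x + ln y.
Proof. by move=> /RltP x_gt0 /RltP y_gt0; rewrite ln_mult. Qed.

Lemma lnXn (x : RR) k : 0 < x -> ln (x ^+ k) = k%:R * ln x.
Proof. by move=> /RltP x_gt0; rewrite -RpowE ln_pow // INRE. Qed.

Lemma ler_ln (x y : RR) : 0 < x -> x <= y -> ln x <= ln y.
Proof.
move=> x_gt0; rewrite le_eqVlt => /predU1P [-> //|xy].
by apply/ltW/RltP/ln_increasing; apply/RltP.
Qed.

Lemma ler_exp (x y : RR) : x <= y -> exp x <= exp y.
Proof.
rewrite le_eqVlt => /predU1P [-> //|xy].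
by apply/ltW/RltP/exp_increasing/RltP.
Qed.

Lemma exp_gt0 (x : RR) : 0 < exp x.
Proof. exact/RltP/exp_pos. Qed.

Lemma lnK (x : RR) : 0 < x -> exp (ln x) = x.
Proof. by move=> /RltP; apply: exp_ln. Qed.

Lemma ln_Rpower2 y : ln (Rpower 2 y) = y * ln 2.
Proof. by rewrite ln_Rpower RmultE. Qed.

Lemma ln2_gt0 : 0 < ln 2.
Proof.
have <- : ln 1 = 0 by exact: ln_1.
by apply/RltP/ln_increasing; apply/RltP; rewrite ?ltr01 ?ltr1n.
Qed.

Lemma xlog2xE x : 0 < x -> xlog2x x = x * ln x / ln 2.
Proof. by move=> x_gt0; rewrite /xlog2x gt_eqF // /log2 mulrA. Qed.

Lemma xlog2x_le0 x : 0 <= x <= 1 -> xlog2x x <= 0.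
Proof.
case/andP; rewrite le_eqVlt => /predU1P [<- _|x_gt0 x_le1].
  by rewrite /xlog2x eqxx.
rewrite xlog2xE // -mulrA; apply: mulr_ge0_le0; first exact: ltW.
apply: mulr_le0_ge0; last by rewrite invr_ge0 ltW // ln2_gt0.
have <- : ln 1 = 0 by exact: ln_1.
exact: ler_ln.
Qed.

Lemma binary_entropy1 : binary_entropy 1 = 0.
Proof.
by rewrite /binary_entropy subrr /xlog2x !eqxx oner_eq0 /log2 ln_1 !mul0r
  mul1r subr0 oppr0.
Qed.

Lemma binary_entropy_ln p : 0 < p < 1 ->
  binary_entropy p * ln 2 = - (p * ln p + (1 - p) * ln (1 - p)).
Proof.
case/andP=> p_gt0 p_lt1; have q_gt0 : 0 < 1 - p by rewrite subr_gt0.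
rewrite /binary_entropy !xlog2xE //; field; exact/lt0r_neq0/ln2_gt0.
Qed.

Lemma binary_entropy_ge p : 0 <= p < 1 ->
  - ((1 - p) * ln (1 - p)) <= binary_entropy p * ln 2.
Proof.
case/andP=> p_ge0 p_lt1; have q_gt0 : 0 < 1 - p by rewrite subr_gt0.
have l2_gt0 := ln2_gt0.
have -> : binary_entropy p * ln 2 = - (xlog2x p * ln 2) - (1 - p) * ln (1 - p).
  by rewrite /binary_entropy (xlog2xE q_gt0); field; apply: lt0r_neq0.
have : xlog2x p * ln 2 <= 0.
  by apply: mulr_le0_ge0; [apply: xlog2x_le0; rewrite p_ge0 ltW | apply: ltW].
lra.
Qed.

Section HammingBall.
Variable T : finType.

Definition bitflip_prob (beta : RR) (h c : {ffun T -> bool}) : RR :=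
  \prod_x (if c x != h x then beta else 1 - beta).

Lemma sum_bitflip_prob beta h : \sum_c bitflip_prob beta h c = 1.
Proof.
rewrite /bitflip_prob.
rewrite -(bigA_distr_bigA (fun x b => if b != h x then beta else 1 - beta)) /=.
by apply: big1 => x _; rewrite big_bool; case: (h x) => /=; ring.
Qed.

Lemma bitflip_probE beta h c : bitflip_prob beta h c =
  beta ^+ hamming c h * (1 - beta) ^+ (#|T| - hamming c h).
Proof.
set S := [set x | c x != h x]; rewrite /bitflip_prob (bigID [in S]) /=.
congr (_ * _).
  by rewrite -prodr_const; apply: eq_bigr => x; rewrite /S inE => ->.
rewrite (eq_bigl [in ~: S]); last by move=> x; rewrite in_setC.
rewrite (eq_bigr (fun=> 1 - beta)); last first.
  by move=> x; rewrite /S !inE negbK => /eqP ->; rewrite eqxx.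
by rewrite prodr_const cardsCs setCK.
Qed.

Lemma bitflip_prob_ge beta h c : 0 < beta <= 1 / 2 ->
  (hamming c h)%:R <= beta * #|T|%:R ->
  Rpower 2 (- (binary_entropy beta * #|T|%:R)) <= bitflip_prob beta h c.
Proof.
case/andP=> beta_gt0 beta_le d_le.
have q_gt0 : 0 < 1 - beta by lra.
have w_gt0 : 0 < bitflip_prob beta h c.
  by rewrite bitflip_probE mulr_gt0 // exprn_gt0.
rewrite -(lnK w_gt0) /Rpower RmultE; apply: ler_exp.
rewrite bitflip_probE lnM ?exprn_gt0 // !lnXn // natrB ?hamming_le_card //.
have /binary_entropy_ln eH : 0 < beta < 1 by apply/andP; split; lra.
have -> : - (binary_entropy beta * #|T|%:R) * ln 2
    = - (binary_entropy beta * ln 2) * #|T|%:R by ring.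
have d_gap : 0 <= beta * #|T|%:R - (hamming c h)%:R by rewrite subr_ge0.
have ln_gap : 0 <= ln (1 - beta) - ln beta by rewrite subr_ge0 ler_ln //; lra.
have := mulr_ge0 d_gap ln_gap.
rewrite eH; lra.
Qed.

(* Comparing the counting measure of the ball with the bit-flip distribution,
   whose mass is at least 2^(-H(beta) #|T|) on every point of the ball. *)
Lemma card_hamming_ball beta (h : {ffun T -> bool}) : 0 < beta <= 1 / 2 ->
  #|[set c | (hamming c h)%:R <= beta * #|T|%:R]|%:R
    <= Rpower 2 (binary_entropy beta * #|T|%:R).
Proof.
move=> /andP [beta_gt0 beta_le]; set B := [set c | _]; set P := Rpower 2 _.
have P_gt0 : 0 < P by apply: exp_gt0.
have ball_mass : #|B|%:R / P <= \sum_(c in B) bitflip_prob beta h c.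
  rewrite mulrC mulr_natr -sumr_const /P -RinvE -Rpower_Ropp.
  by apply: ler_sum => c; rewrite inE; apply: bitflip_prob_ge; rewrite beta_gt0.
have mass_le1 : \sum_(c in B) bitflip_prob beta h c <= 1.
  rewrite -(sum_bitflip_prob beta h) [leRHS](bigID [in B]) /= lerDl.
  by apply: sumr_ge0 => c _; apply: prodr_ge0 => x _; case: ifP; lra.
by rewrite -[P]mul1r -ler_pdivrMr //; apply: le_trans ball_mass mass_le1.
Qed.

End HammingBall.

Lemma adjM p q r (A : 'M[CC]_(p, q)) (B : 'M[CC]_(q, r)) :
  adj (A *m B) = adj B *m adj A.
Proof. by rewrite /adj map_mxM trmx_mul. Qed.

Lemma adjK p q (A : 'M[CC]_(p, q)) : adj (adj A) = A.
Proof. by apply/matrixP=> i j; rewrite !mxE conjCK. Qed.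

Lemma adjB p q (A B : 'M[CC]_(p, q)) : adj (A - B) = adj A - adj B.
Proof. by apply/matrixP=> i j; rewrite !mxE rmorphB. Qed.

Lemma adj1 p : adj (1%:M : 'M[CC]_p) = 1%:M.
Proof. by apply/matrixP=> i j; rewrite !mxE conjC_nat eq_sym. Qed.

Lemma adj_delta p q (i : 'I_p) (j : 'I_q) :
  adj (delta_mx i j : 'M[CC]_(p, q)) = delta_mx j i.
Proof. by apply/matrixP=> k l; rewrite !mxE conjC_nat andbC. Qed.

Lemma psd_diag_ge0 d (A : 'M[CC]_d) i : psd A -> 0 <= A i i.
Proof.
by case=> _ /(_ (delta_mx i 0)); rewrite adj_delta -rowE -colE !mxE.
Qed.

Lemma psd_trace_ge0 d (A : 'M[CC]_d) : psd A -> 0 <= \tr A.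
Proof. by move=> psdA; apply: sumr_ge0 => i _; apply: psd_diag_ge0. Qed.

Lemma psd_adj_mul d e (A : 'M[CC]_d) (B : 'M[CC]_(d, e)) :
  psd A -> psd (adj B *m A *m B).
Proof.
case=> adjA formA; split; first by rewrite !adjM adjK adjA mulmxA.
by move=> u; have := formA (B *m u); rewrite adjM !mulmxA.
Qed.

Lemma psd_form_le_trace d (A : 'M[CC]_d) (u : 'cV[CC]_d) :
  psd A -> adj u *m u = 1%:M -> (adj u *m A *m u) 0 0 <= \tr A.
Proof.
move=> psdA unit_u; set P := 1%:M - u *m adj u.
have adjP : adj P = P by rewrite /P adjB adj1 adjM adjK.
have idemP : P *m P = P.
  rewrite /P mulmxBl mul1mx mulmxBr mulmx1 -!mulmxA (mulmxA (adj u)) unit_u.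
  by rewrite mul1mx subrr subr0.
have -> : \tr A = (adj u *m A *m u) 0 0 + \tr (adj P *m A *m P).
  rewrite adjP mxtrace_mulC mulmxA idemP /P mulmxBl mul1mx linearB /=.
  rewrite mxtrace_mulC mulmxA mxtrace_mulC mulmxA trace_mx11.
  by rewrite [RHS]addrC subrK.
by rewrite lerDl; apply/psd_trace_ge0/psd_adj_mul.
Qed.

Lemma povm_success_le (C H : finType) d (M : H -> 'M[CC]_d)
    (psi : C -> 'cV[CC]_d) (good : C -> H -> bool) (K : RR) :
  (forall h, psd (M h)) -> \sum_h M h = 1%:M ->
  (forall c, adj (psi c) *m psi c = 1%:M) ->
  (forall h, #|[set c | good c h]|%:R <= K) ->
  \sum_c \sum_(h | good c h) (adj (psi c) *m M h *m psi c) 0 0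
    <= toC (K * d%:R).
Proof.
move=> psdM sumM unit_psi card_good.
apply: (@le_trans _ _ (\sum_c \sum_(h | good c h) \tr (M h))).
  by apply: ler_sum => c _; apply: ler_sum => h _; apply: psd_form_le_trace.
rewrite (exchange_big_dep predT) //=.
apply: (@le_trans _ _ (\sum_h toC K * \tr (M h))).
  apply: ler_sum => h _; rewrite sumr_const -cardsE -mulr_natl.
  apply: ler_wpM2r; first exact: psd_trace_ge0.
  by rewrite /toC -(rmorph_nat (real_complex RR)) lecR; apply: card_good.
by rewrite -mulr_sumr -linear_sum /= sumM mxtrace1 /toC rmorphM rmorph_nat.
Qed.

Lemma qex_state_unit n m (D : domain n -> RR) (c : boolfun n) :
  (forall x, 0 <= D x) -> \sum_x D x = 1 ->
  adj (qex_state m D c) *m qex_state m D c = 1%:M.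
Proof.
move=> D_ge0 sumD; apply/matrixP=> i j; rewrite (ord1 i) (ord1 j) !mxE /=.
set g := fun xb => (qex_amp D c xb)^* * qex_amp D c xb.
transitivity
  (\sum_(k < qdim n m) \prod_(j < m) g ((enum_val k : ex_basis n m) j)).
  apply: eq_bigr => k _; rewrite !mxE rmorph_prod -big_split /=.
  by apply: eq_bigr.
rewrite /qdim -(big_enum_val (A := {: ex_basis n m})
  (fun f : ex_basis n m => \prod_(j < m) g (f j))) /=.
rewrite -(bigA_distr_bigA (fun (j : 'I_m) xb => g xb)).
suff -> : \sum_xb g xb = 1 by rewrite big1.
rewrite -(pair_bigA _ (fun x b => g (x, b))) -(rmorph1 (real_complex RR)) -sumD.
rewrite rmorph_sum; apply: eq_bigr => x _; rewrite big_bool /g /qex_amp /=.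
have normx : (toC (Num.sqrt (D x)))^* * toC (Num.sqrt (D x)) = (D x)%:C%C.
  rewrite /toC geC0_conj ?ler0c ?sqrtr_ge0 //.
  by rewrite -rmorphM -expr2 sqr_sqrtr.
by case: (c x); rewrite /= ?mulr0 ?addr0 ?add0r normx.
Qed.

Lemma sample_bound_of_counting (N k : nat) (x delta : RR) :
  0 <= delta <= 1 ->
  (2 ^ N)%:R * (1 - delta) <= Rpower 2 (x * N%:R) * (2 ^ k)%:R ->
  (1 - delta) * (1 - x) * N%:R - binary_entropy delta <= k%:R.
Proof.
case/andP=> delta_ge0; rewrite le_eqVlt => /predU1P [-> _|delta_lt1 counting].
  by rewrite subrr !mul0r binary_entropy1 subrr.
have q_gt0 : 0 < 1 - delta by rewrite subr_gt0.
have l2_gt0 := ln2_gt0.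
have log_counting :
    N%:R * ln 2 + ln (1 - delta) <= x * N%:R * ln 2 + k%:R * ln 2.
  have pow2_gt0 j : 0 < (2 ^ j)%:R :> RR by rewrite ltr0n expn_gt0.
  have Rpower_gt0 : 0 < Rpower 2 (x * N%:R) by apply: exp_gt0.
  have := ler_ln (mulr_gt0 (pow2_gt0 N) q_gt0) counting.
  by rewrite !lnM // !natrX !lnXn // ln_Rpower2.
have /binary_entropy_ge Hdelta : 0 <= delta < 1 by rewrite delta_ge0.
suff : ((1 - delta) * (1 - x) * N%:R - binary_entropy delta) * ln 2
    <= k%:R * ln 2 by rewrite ler_pM2r.
have gap : 0 <= x * N%:R * ln 2 + k%:R * ln 2 - (N%:R * ln 2 + ln (1 - delta)).
  by rewrite subr_ge0.
have := mulr_ge0 (ltW q_gt0) gap.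
have := mulr_ge0 delta_ge0 (mulr_ge0 (ler0n _ k) (ltW l2_gt0)).
lra.
Qed.

Lemma card_boolfun n : #|{: boolfun n}| = (2 ^ 2 ^ n)%N.
Proof. by rewrite card_ffun card_bool card_ord. Qed.

Lemma qdimE n m : qdim n m = (2 ^ (n.+1 * m))%N.
Proof.
by rewrite /qdim card_ffun card_prod !card_ord card_bool -expnSr expnM.
Qed.

Theorem mainTheorem4 :
  exists c : RR, 0 < c /\
  forall (n m : nat) (beta eps delta : RR),
    (1 <= n)%N ->
    0 < beta <= 1 / 2 ->
    0 <= eps < beta / (n.+1)%:R ->
    0 <= delta <= 1 ->
    forall M : boolfun n -> 'M[CC]_(qdim n m),
      pac_learner (@zipf n) eps delta M ->
      c * (((1 - delta) * (1 - binary_entropy beta) * (2 ^ n)%:R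
             - binary_entropy delta) / n%:R) <= m%:R.
Proof.
exists (1 / 2); split; first by rewrite divr_gt0 ?ltr01 ?ltr0n.
move=> n m beta eps delta n_ge1 beta_range /andP [_ eps_lt] delta01 M.
case=> [[M_psd M_sum] M_pac]; set N := (2 ^ n)%N.
have ball_le h : #|[set c | err (@zipf n) c h <= eps]|%:R
    <= Rpower 2 (binary_entropy beta * N%:R).
  have := card_hamming_ball h beta_range; rewrite card_ord; apply: le_trans.
  rewrite ler_nat; apply/subset_leq_card/subsetP => c; rewrite !inE => err_le.
  by apply: hamming_le_of_zipf_err; apply: le_lt_trans eps_lt.
have unit_state c :
    adj (qex_state m (@zipf n) c) *m qex_state m (@zipf n) c = 1%:M.
  by apply: qex_state_unit; [apply: zipf_ge0 | apply: sum_zipf].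
have counting : (2 ^ N)%:R * (1 - delta)
    <= Rpower 2 (binary_entropy beta * N%:R) * (2 ^ (n.+1 * m))%:R.
  rewrite -lecR -qdimE.
  apply: le_trans (povm_success_le M_psd M_sum unit_state ball_le).
  apply: (@le_trans _ _ (\sum_(c : boolfun n) toC (1 - delta))).
    by rewrite sumr_const card_boolfun /toC rmorphM rmorph_nat mulr_natl.
  by apply: ler_sum => c _; apply: M_pac.
have n_succ_le : (n.+1 <= n * 2)%N by rewrite muln2 -addnn -addn1 leq_add2l.
set Y := (_ - binary_entropy delta).
rewrite mul1r mulrC -mulrA -invfM ler_pdivrMr ?mulr_gt0 ?ltr0n //.
apply: le_trans (sample_bound_of_counting delta01 counting) _.
by rewrite -!natrM ler_nat mulnC leq_mul2l n_succ_le orbT.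
Qed.
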